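(* Let $n$ be a positive integer and let $\alpha,\beta,\gamma,\delta: \mathcal{P}(n) \to [0,\infty)$ satisfy \[ \alpha(A)\beta(B) \leq \gamma(B \setminus A)\,\delta(A \setminus B) \quad \text{for all } A,B \in \mathcal{P}(n). \] Then \[ \Big(\sum_{A \in \mathcal{P}(n)}\alpha(A)\Big)\Big(\sum_{B \in \mathcal{P}(n)}\beta(B)\Big) \leq \Big(\sum_{C \in \mathcal{P}(n)}\gamma(C)\Big)\Big(\sum_{D \in \mathcal{P}(n)}\delta(D)\Big). \]
   Context: $[n]=\{1,\dots,n\}$ and $\mathcal{P}(n)$ denotes the power set of $[n]$. *)

From HB Require Import structures.
From mathcomp Require Import all_boot all_order all_algebra.

From HB Require Import structures.
From mathcomp Require Import all_boot all_order all_algebra.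
From mathcomp Require Import ring lra.
Import Order.TTheory GRing.Theory Num.Theory.
Local Open Scope ring_scope.

(* A four-functions inequality on the subsets of a finite set, proved by
   induction on the size of the ground set U (Ahlswede–Daykin style). *)

(* If x, y <= P and xy <= PQ (all nonnegative), then x + y <= P + Q:
   indeed P(x + y) <= P^2 + xy <= P^2 + PQ since (P - x)(P - y) >= 0. *)
Lemma add_le_of_mul_le (R : realFieldType) (x y P Q : R) :
  0 <= x -> 0 <= y -> 0 <= Q -> x <= P -> y <= P -> x * y <= P * Q ->
  x + y <= P + Q.
Proof. by move=> *; nra. Qed.

(* The inequality on the four subsets of a one-point set: index 0 stands for
   the empty set and index 1 for {x}, and the hypotheses are the four
   instances alpha(A) beta(B) <= gamma(B \ A) delta(A \ B). *)
Lemma four_functions_two_points (R : realFieldType)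
    (a0 a1 b0 b1 c0 c1 d0 d1 : R) :
  0 <= a0 -> 0 <= a1 -> 0 <= b0 -> 0 <= b1 ->
  0 <= c0 -> 0 <= c1 -> 0 <= d0 -> 0 <= d1 ->
  a0 * b0 <= c0 * d0 -> a1 * b1 <= c0 * d0 ->
  a1 * b0 <= c0 * d1 -> a0 * b1 <= c1 * d0 ->
  (a0 + a1) * (b0 + b1) <= (c0 + c1) * (d0 + d1).
Proof.
move=> ha0 ha1 hb0 hb1 hc0 hc1 hd0 hd1 h00 h11 h10 h01.
(* The diagonal terms are controlled through the product of the two mixed
   inequalities: (a0 b0)(a1 b1) = (a1 b0)(a0 b1) <= (c0 d1)(c1 d0). *)
have diag : a0 * b0 + a1 * b1 <= c0 * d0 + c1 * d1.
  apply: add_le_of_mul_le => //; rewrite ?mulr_ge0 //.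
  have -> : a0 * b0 * (a1 * b1) = (a1 * b0) * (a0 * b1) by ring.
  have -> : c0 * d0 * (c1 * d1) = (c0 * d1) * (c1 * d0) by ring.
  by apply: ler_pM; rewrite ?mulr_ge0.
have -> : (a0 + a1) * (b0 + b1) = (a0 * b0 + a1 * b1) + (a1 * b0 + a0 * b1)
  by ring.
have -> : (c0 + c1) * (d0 + d1) = (c0 * d0 + c1 * d1) + (c0 * d1 + c1 * d0)
  by ring.
by rewrite lerD // lerD.
Qed.

Section Subsets.

Context {R : realFieldType} {T : finType}.
Implicit Types (U A B : {set T}) (f : {set T} -> R).

Definition collapse (x : T) f A : R := f A + f (x |: A).

Lemma collapse_ge0 (x : T) f : (forall A, 0 <= f A) ->
  forall A, 0 <= collapse x f A.
Proof. by move=> f_ge0 A; rewrite addr_ge0. Qed.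

Lemma sum_subsets_split f {U x} : x \in U ->
  \sum_(A : {set T} | A \subset U) f A
  = \sum_(A : {set T} | A \subset U :\ x) collapse x f A.
Proof.
move=> xU; rewrite big_split /= (bigID (fun A : {set T} => x \in A)) /= addrC.
congr (_ + _); first by apply: eq_bigl => A; rewrite subsetD1.
rewrite (reindex_onto (fun A : {set T} => x |: A) (fun A : {set T} => A :\ x)).
  2: by move=> A /andP[_ xA]; rewrite setD1K.
apply: eq_bigl => B; case xB: (x \in B).
  (* Such a B is excluded on both sides, since (x |: B) :\ x <> B. *)
  rewrite subsetD1 xB andbF; apply/negbTE/negP => /andP[_ /eqP eB].
  by move: xB; rewrite -eB setD11.
rewrite setU1K ?xB // eqxx andbT subsetD1 xB andbT setU11 andbT.
by rewrite subUset sub1set xU.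
Qed.

Lemma setD_setU1 {x : T} {A B} : x \notin A -> x \notin B ->
  [/\ (x |: A) :\: (x |: B) = A :\: B,
      (x |: A) :\: B = x |: (A :\: B)
    & A :\: (x |: B) = A :\: B].
Proof.
move=> xA xB; split; apply/setP => y; rewrite !inE;
  by case: (eqVneq y x) => [->|]; rewrite ?(negbTE xA) ?(negbTE xB).
Qed.

Lemma four_functions_subsets U (alpha beta gamma delta : {set T} -> R) :
  (forall A, 0 <= alpha A) -> (forall A, 0 <= beta A) ->
  (forall A, 0 <= gamma A) -> (forall A, 0 <= delta A) ->
  (forall A B, A \subset U -> B \subset U ->
     alpha A * beta B <= gamma (B :\: A) * delta (A :\: B)) ->
  (\sum_(A : {set T} | A \subset U) alpha A)
    * (\sum_(B : {set T} | B \subset U) beta B)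
  <= (\sum_(C : {set T} | C \subset U) gamma C)
    * (\sum_(D : {set T} | D \subset U) delta D).
Proof.
move: {2}#|U| (erefl #|U|) => k.
elim: k U alpha beta gamma delta => [|k IH] U alpha beta gamma delta cardU.
all: move=> ha hb hc hd H.
  rewrite (cards0_eq cardU).
  have sum0 f : \sum_(A : {set T} | A \subset set0) f A = f set0.
    by apply: big_pred1 => A; rewrite /= subset0.
  by rewrite !sum0; have := H set0 set0 (sub0set _) (sub0set _); rewrite setDv.
have [x xU] : exists x, x \in U by apply/set0Pn; rewrite -card_gt0 cardU.
have cardUx : #|U :\ x| = k by move: cardU; rewrite (cardsD1 x) xU => -[].
rewrite !(sum_subsets_split _ xU); apply: IH => //; try exact: collapse_ge0.
(* The collapsed functions satisfy the hypothesis on U :\ x: each instance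
   is the two-point case, fed with four instances of H. *)
move=> A B; rewrite !subsetD1 => /andP[AU xA] /andP[BU xB].
have xAU : x |: A \subset U by rewrite subUset sub1set xU.
have xBU : x |: B \subset U by rewrite subUset sub1set xU.
have [eAB eAxB eABx] := setD_setU1 xA xB.
have [eBA eBxA eBAx] := setD_setU1 xB xA.
apply: four_functions_two_points => //.
- exact: H.
- by rewrite -eBA -eAB; apply: H.
- by rewrite -eAxB -eBAx; apply: H.
- by rewrite -eBxA -eABx; apply: H.
Qed.

End Subsets.

(* [n] is modelled by 'I_n and P(n) by {set 'I_n}: the whole power set is
   the set of subsets of [set: 'I_n]. *)
Theorem lemma2p3 (R : realFieldType) (n : nat) (hn : (0 < n)%N)
  (alpha beta gamma delta : {set 'I_n} -> R)
  (ha : forall A, 0 <= alpha A) (hb : forall A, 0 <= beta A)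
  (hc : forall A, 0 <= gamma A) (hd : forall A, 0 <= delta A)
  (H : forall A B : {set 'I_n}, alpha A * beta B <= gamma (B :\: A) * delta (A :\: B)) :
  (\sum_(A : {set 'I_n}) alpha A) * (\sum_(B : {set 'I_n}) beta B)
  <= (\sum_(C : {set 'I_n}) gamma C) * (\sum_(D : {set 'I_n}) delta D).
Proof.
have sum_all f :
    \sum_(A : {set 'I_n}) f A = \sum_(A : {set 'I_n} | A \subset setT) f A :> R.
  by apply: eq_bigl => A; rewrite subsetT.
rewrite !sum_all.
by apply: four_functions_subsets => // A B _ _.
Qed.
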